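(* (Setting as in the context.) Let $\tau>0$ and let $\{(u^k,y^k,v^k,z^k,x^k)\}$ be generated by Algorithm SCB-SPADMM. Then for every $k\ge0$, $(u^{k+1},y^{k+1},v^{k+1},z^{k+1},x^{k+1})$ can be generated exactly by $$(u^{k+1},y^{k+1})=\operatorname{argmin}_{u,y}\ \mathcal L_\sigma(u,y,v^k,z^k;x^k)+\tfrac\sigma2\|(u,y_{\le p-1})-(u^k,y^k_{\le p-1})\|^2_{\widehat{\mathcal T}_{f_p}}+\tfrac\sigma2\|y_p-y_p^k\|^2_{\mathcal T_{\theta_p}},$$ $$(v^{k+1},z^{k+1})=\operatorname{argmin}_{v,z}\ \mathcal L_\sigma(u^{k+1},y^{k+1},v,z;x^k)+\tfrac\sigma2\|(v,z_{\le q-1})-(v^k,z^k_{\le q-1})\|^2_{\widehat{\mathcal T}_{g_q}}+\tfrac\sigma2\|z_q-z_q^k\|^2_{\mathcal T_{\varphi_q}},$$ $$x^{k+1}=x^k+\tau\sigma(\mathcal F^*u^{k+1}+\mathcal A^*y^{k+1}+\mathcal G^*v^{k+1}+\mathcal B^*z^{k+1}-c).$$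
   Context: Let $p,q\ge1$ be integers, $\mathcal U,\mathcal V,\mathcal X,\mathcal Y_i,\mathcal Z_j$ real finite-dimensional Euclidean spaces, $\mathcal Y=\prod_i\mathcal Y_i$, $\mathcal Z=\prod_j\mathcal Z_j$; $f,g$ closed proper convex on $\mathcal U,\mathcal V$; $\mathcal F:\mathcal X\to\mathcal U$, $\mathcal G:\mathcal X\to\mathcal V$, $\mathcal A_i:\mathcal X\to\mathcal Y_i$, $\mathcal B_j:\mathcal X\to\mathcal Z_j$ linear; $c\in\mathcal X$; $\theta_i(y_i)=\frac12\langle y_i,\mathcal P_iy_i\rangle-\langle b_i,y_i\rangle$, $\varphi_j(z_j)=\frac12\langle z_j,\mathcal Q_jz_j\rangle-\langle d_j,z_j\rangle$ with $\mathcal P_i,\mathcal Q_j$ self-adjoint positive semidefinite. $\mathcal A^*y=\sum_i\mathcal A_i^*y_i$, $\mathcal B^*z=\sum_j\mathcal B_j^*z_j$, $\Gamma(u,y,v,z)=\mathcal F^*u+\mathcal A^*y+\mathcal G^*v+\mathcal B^*z-c$, $\sigma>0$, $\mathcal L_\sigma(u,y,v,z;x)=f(u)+\sum\theta_i(y_i)+g(v)+\sum\varphi_j(z_j)+\langle x,\Gamma\rangle+\frac\sigma2\|\Gamma\|^2$. $\mathcal E_{\theta_i}\succ0$ self-adjoint with $\mathcal E_{\theta_i}\succeq\sigma^{-1}\mathcal P_i+\mathcal A_i\mathcal A_i^*$, $\mathcal T_{\theta_i}:=\mathcal E_{\theta_i}-\sigma^{-1}\mathcal P_i-\mathcal A_i\mathcal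 A_i^*$; $\mathcal E_{\varphi_j}\succ0$ self-adjoint with $\mathcal E_{\varphi_j}\succeq\sigma^{-1}\mathcal Q_j+\mathcal B_j\mathcal B_j^*$, $\mathcal T_{\varphi_j}:=\mathcal E_{\varphi_j}-\sigma^{-1}\mathcal Q_j-\mathcal B_j\mathcal B_j^*$. $\mathcal T_f,\mathcal T_g$ self-adjoint positive semidefinite on $\mathcal U,\mathcal V$. Notation $y_{\le i},y_{\ge i},z_{\le j},z_{\ge j}$ for sub-tuples (empty if out of range), $\|w\|^2_{\mathcal T}=\langle w,\mathcal Tw\rangle$. $\mathcal F_1:=\mathcal F$, $\mathcal F_{i+1}x:=(\mathcal Fx,\mathcal A_1x,\dots,\mathcal A_ix)$; $\widehat{\mathcal T}_{f_1}:=\mathcal T_f+\mathcal F_1\mathcal A_1^*\mathcal E_{\theta_1}^{-1}\mathcal A_1\mathcal F_1^*$, $\widehat{\mathcal T}_{f_i}:=\mathrm{diag}(\widehat{\mathcal T}_{f_{i-1}},\mathcal T_{\theta_{i-1}})+\mathcal F_i\mathcal A_i^*\mathcal E_{\theta_i}^{-1}\mathcal A_i\mathcal F_i^*$ ($i=2,\dots,p$). Analogously $\mathcal G_1:=\mathcal G$, $\mathcal G_{j+1}x:=(\mathcal Gx,\mathcal B_1x,\dots,\mathcal B_jx)$; $\widehat{\mathcal T}_{g_1}:=\mathcal T_g+\mathcal G_1\mathcal B_1^*\mathcal E_{\varphi_1}^{-1}\mathcal B_1\mathcal G_1^*$, $\widehat{\mathcal T}_{g_j}:=\mathrm{diag}(\widehat{\mathcal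 T}_{g_{j-1}},\mathcal T_{\varphi_{j-1}})+\mathcal G_j\mathcal B_j^*\mathcal E_{\varphi_j}^{-1}\mathcal B_j\mathcal G_j^*$ ($j=2,\dots,q$). Algorithm SCB-SPADMM: choose $(u^0,y^0,v^0,z^0,x^0)\in\mathrm{dom}f\times\mathcal Y\times\mathrm{dom}g\times\mathcal Z\times\mathcal X$; for $k=0,1,\dots$: (1) for $i=p,\dots,1$, $\bar y_i^k=\operatorname{argmin}_{y_i}\mathcal L_\sigma(u^k,(y^k_{\le i-1},y_i,\bar y^k_{\ge i+1}),v^k,z^k;x^k)+\frac\sigma2\|y_i-y_i^k\|^2_{\mathcal T_{\theta_i}}$, then $u^{k+1}=\operatorname{argmin}_u\mathcal L_\sigma(u,\bar y^k,v^k,z^k;x^k)+\frac\sigma2\|u-u^k\|^2_{\mathcal T_f}$; (2) for $i=1,\dots,p$, $y_i^{k+1}=\operatorname{argmin}_{y_i}\mathcal L_\sigma(u^{k+1},(y^{k+1}_{\le i-1},y_i,\bar y^k_{\ge i+1}),v^k,z^k;x^k)+\frac\sigma2\|y_i-y_i^k\|^2_{\mathcal T_{\theta_i}}$; (3) for $j=q,\dots,1$, $\bar z_j^k=\operatorname{argmin}_{z_j}\mathcal L_\sigma(u^{k+1},y^{k+1},v^k,(z^k_{\le j-1},z_j,\bar z^k_{\ge j+1});x^k)+\frac\sigma2\|z_j-z_j^k\|^2_{\mathcal T_{\varphi_j}}$, then $v^{k+1}=\operatorname{argmin}_v\mathcal L_\sigma(u^{k+1},y^{k+1},v,\bar z^k;x^k)+\frac\sigma2\|v-v^k\|^2_{\mathcal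 T_g}$; (4) for $j=1,\dots,q$, $z_j^{k+1}=\operatorname{argmin}_{z_j}\mathcal L_\sigma(u^{k+1},y^{k+1},v^{k+1},(z^{k+1}_{\le j-1},z_j,\bar z^k_{\ge j+1});x^k)+\frac\sigma2\|z_j-z_j^k\|^2_{\mathcal T_{\varphi_j}}$; (5) $x^{k+1}=x^k+\tau\sigma(\mathcal F^*u^{k+1}+\mathcal A^*y^{k+1}+\mathcal G^*v^{k+1}+\mathcal B^*z^{k+1}-c)$. *)

From HB Require Import structures.
From mathcomp Require Import all_boot all_order all_algebra.
From mathcomp Require Import all_classical all_reals all_analysis.
Set Implicit Arguments. Unset Strict Implicit. Unset Printing Implicit Defensive.
Import Order.TTheory GRing.Theory Num.Theory.
Import numFieldNormedType.Exports.
Local Open Scope ring_scope.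

(* Euclidean spaces are modelled as column vectors 'cV[R]_n with the standard
   inner product; linear maps as matrices (adjoint = transpose). *)

Definition ip (R : realType) n (a b : 'cV[R]_n) : R := (a^T *m b) 0 0.
Definition qn (R : realType) n (M : 'M[R]_n) (w : 'cV[R]_n) : R := ip w (M *m w).

Definition psdmx (R : realType) n (M : 'M[R]_n) : Prop :=
  M^T = M /\ forall w, 0 <= qn M w.
Definition pdmx (R : realType) n (M : 'M[R]_n) : Prop :=
  M^T = M /\ forall w, w != 0 -> 0 < qn M w.

Definition econvex (R : realType) n (f : 'cV[R]_n -> \bar R) : Prop :=
  forall (a b : 'cV[R]_n) (ra rb t : R), 0 <= t <= 1 ->
    (f a <= ra%:E)%E -> (f b <= rb%:E)%E ->
    (f (t *: a + (1 - t) *: b)%R <= (t * ra + (1 - t) * rb)%:E)%E.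
Definition eclosed (R : realType) n (f : 'cV[R]_n -> \bar R) : Prop :=
  forall alpha : R, closed [set w | (f w <= alpha%:E)%E].
Definition eproper (R : realType) n (f : 'cV[R]_n -> \bar R) : Prop :=
  (forall w, f w != -oo%E) /\ exists w, (f w < +oo)%E.
Definition closed_proper_convex (R : realType) n (f : 'cV[R]_n -> \bar R) :=
  [/\ econvex f, eclosed f & eproper f].

Definition is_argmin (R : realType) (T : Type) (phi : T -> \bar R) (x : T) : Prop :=
  forall w, (phi x <= phi w)%E.

(* block families (y_0, y_1, ...), y_j in 'cV_(nd j); only j < p is used *)
Definition bfam (R : realType) (nd : nat -> nat) := forall j : nat, 'cV[R]_(nd j).
Definition bmix (R : realType) nd (j : nat) (a b : bfam R nd) : bfam R nd :=
  fun l => if (l < j)%N then a l else b l.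
Definition bupd (R : realType) nd (a : bfam R nd) (j : nat) (w : 'cV[R]_(nd j)) : bfam R nd :=
  @dfwith nat (fun l => 'cV[R]_(nd l)) a j w.
Definition bsub (R : realType) nd (a b : bfam R nd) : bfam R nd := fun l => a l - b l.

Definition Gam (R : realType) nu nv nx (ny nz : nat -> nat) (p q : nat)
  (F : 'M[R]_(nu, nx)) (A : forall j, 'M[R]_(ny j, nx))
  (G : 'M[R]_(nv, nx)) (B : forall j, 'M[R]_(nz j, nx)) (c : 'cV[R]_nx)
  (u : 'cV[R]_nu) (y : bfam R ny) (v : 'cV[R]_nv) (z : bfam R nz) : 'cV[R]_nx :=
  F^T *m u + \sum_(j < p) (A j)^T *m y j + G^T *m v + \sum_(j < q) (B j)^T *m z j - c.

Definition quadf (R : realType) n (P : 'M[R]_n) (b : 'cV[R]_n) (w : 'cV[R]_n) : R :=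
  2^-1 * qn P w - ip b w.

Definition Lag (R : realType) nu nv nx (ny nz : nat -> nat) (p q : nat)
  (f : 'cV[R]_nu -> \bar R) (g : 'cV[R]_nv -> \bar R)
  (F : 'M[R]_(nu, nx)) (A : forall j, 'M[R]_(ny j, nx))
  (G : 'M[R]_(nv, nx)) (B : forall j, 'M[R]_(nz j, nx)) (c : 'cV[R]_nx)
  (P : forall j, 'M[R]_(ny j)) (b : bfam R ny)
  (Q : forall j, 'M[R]_(nz j)) (d : bfam R nz) (sigma : R)
  (u : 'cV[R]_nu) (y : bfam R ny) (v : 'cV[R]_nv) (z : bfam R nz) (x : 'cV[R]_nx)
  : \bar R :=
  let Gm := Gam p q F A G B c u y v z in
  (f u + g v +
   (\sum_(j < p) quadf (P j) (b j) (y j) + \sum_(j < q) quadf (Q j) (d j) (z j)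
    + ip x Gm + sigma / 2 * ip Gm Gm)%:E)%E.

Definition Tblk (R : realType) nx (ny : nat -> nat) (sigma : R)
  (P : forall j, 'M[R]_(ny j)) (A : forall j, 'M[R]_(ny j, nx))
  (E : forall j, 'M[R]_(ny j)) (j : nat) : 'M[R]_(ny j) :=
  E j - sigma^-1 *: P j - A j *m (A j)^T.

(* 0-based: index j here corresponds to the paper's index j+1.
   ds j = dim of U x Y_0 x ... x Y_{j-1} (domain of hatT_{f_{j+1}}) *)
Fixpoint ds nu (ny : nat -> nat) (j : nat) : nat :=
  match j with 0 => nu | S j' => (ds nu ny j' + ny j')%N end.

Fixpoint Fm (R : realType) nu nx (ny : nat -> nat) (F : 'M[R]_(nu, nx))
  (A : forall j, 'M[R]_(ny j, nx)) (j : nat) : 'M[R]_(ds nu ny j, nx) :=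
  match j return 'M[R]_(ds nu ny j, nx) with
  | 0 => F
  | S j' => col_mx (Fm F A j') (A j')
  end.

Fixpoint hatT (R : realType) nu nx (ny : nat -> nat) (sigma : R)
  (F : 'M[R]_(nu, nx)) (A : forall j, 'M[R]_(ny j, nx))
  (P : forall j, 'M[R]_(ny j)) (E : forall j, 'M[R]_(ny j)) (T0 : 'M[R]_nu)
  (j : nat) : 'M[R]_(ds nu ny j) :=
  match j return 'M[R]_(ds nu ny j) with
  | 0 => T0 + Fm F A 0 *m (A 0)^T *m invmx (E 0) *m A 0 *m (Fm F A 0)^T
  | S j' => block_mx (hatT sigma F A P E T0 j') 0 0 (Tblk sigma P A E j')
            + Fm F A (S j') *m (A (S j'))^T *m invmx (E (S j')) *m A (S j')
              *m (Fm F A (S j'))^T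
  end.

Fixpoint stack (R : realType) nu (ny : nat -> nat) (w : 'cV[R]_nu) (y : bfam R ny)
  (j : nat) : 'cV[R]_(ds nu ny j) :=
  match j return 'cV[R]_(ds nu ny j) with
  | 0 => w
  | S j' => col_mx (stack w y j') (y j')
  end.

(* Each y_j-subproblem of the sweep is, up to a constant, the strongly convex quadratic
   q(y, s) := 1/2 |y|^2_E + <y, s> with E = sigma E_theta_j, minimised at y = -E^-1 s,
   where the linear coefficient s = s(x) is affine in the remaining variables x.
   Completing the square gives the two-block lemma: if ybar minimises q(., s(x0)), x1
   minimises a(x) + q(ybar, s(x)) and y1 minimises q(., s(x1)), then (x1, y1) minimises
   a(x) + q(y, s(x)) + 1/2 |s(x) - s(x0)|^2_(E^-1).  Applying it to y_1, ..., y_p in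
   turn, starting from the u-step, the extra penalties add up to exactly the recursion
   defining hat T_(f_j); the (v, z) half is the same argument and the multiplier update
   is untouched.  Finiteness of f(u^k) and g(v^k), needed to cancel them in the
   extended-real optimality conditions, propagates along the iterations. *)

From HB Require Import structures.
From mathcomp Require Import all_boot all_order all_algebra.
From mathcomp Require Import all_classical all_reals all_analysis.
From mathcomp Require Import ring lra.
Import Order.TTheory GRing.Theory Num.Theory.
Import numFieldNormedType.Exports.
Set Implicit Arguments. Unset Strict Implicit. Unset Printing Implicit Defensive.
Local Open Scope ring_scope.

Section InnerProduct.
Variables (R : realType) (n : nat).
Implicit Types a b w : 'cV[R]_n.

Lemma ipC a b : ip a b = ip b a.
Proof. by rewrite /ip -[in LHS](trmxK (a^T *m b)) trmx_mul trmxK mxE. Qed.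

Lemma ipDr a b w : ip a (b + w) = ip a b + ip a w.
Proof. by rewrite /ip mulmxDr mxE. Qed.

Lemma ipDl a b w : ip (b + w) a = ip b a + ip w a.
Proof. by rewrite ipC ipDr !(ipC a). Qed.

Lemma ipNr a b : ip a (- b) = - ip a b.
Proof. by rewrite /ip mulmxN mxE. Qed.

Lemma ipNl a b : ip (- b) a = - ip b a.
Proof. by rewrite ipC ipNr ipC. Qed.

Lemma ipBr a b w : ip a (b - w) = ip a b - ip a w.
Proof. by rewrite ipDr ipNr. Qed.

Lemma ipBl a b w : ip (b - w) a = ip b a - ip w a.
Proof. by rewrite ipDl ipNl. Qed.

Lemma ipZr a b (k : R) : ip a (k *: b) = k * ip a b.
Proof. by rewrite /ip -scalemxAr mxE. Qed.

Lemma ipZl a b (k : R) : ip (k *: a) b = k * ip a b.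
Proof. by rewrite ipC ipZr ipC. Qed.

Lemma ip0r a : ip a 0 = 0.
Proof. by rewrite /ip mulmx0 mxE. Qed.

Lemma ip0l a : ip 0 a = 0.
Proof. by rewrite ipC ip0r. Qed.

End InnerProduct.

Lemma ip_mulmx (R : realType) m n (M : 'M[R]_(m, n)) (a : 'cV[R]_m) (b : 'cV[R]_n) :
  ip a (M *m b) = ip (M^T *m a) b.
Proof. by rewrite /ip trmx_mul trmxK mulmxA. Qed.

Lemma ip_col_mx (R : realType) m n (a a' : 'cV[R]_m) (d d' : 'cV[R]_n) :
  ip (col_mx a d) (col_mx a' d') = ip a a' + ip d d'.
Proof. by rewrite /ip tr_col_mx mul_row_col mxE. Qed.

Section QuadraticForm.
Variable R : realType.

Lemma qn0 n (M : 'M[R]_n) : qn M 0 = 0.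
Proof. by rewrite /qn mulmx0 ip0r. Qed.

Lemma qnDl n (M N : 'M[R]_n) w : qn (M + N) w = qn M w + qn N w.
Proof. by rewrite /qn mulmxDl ipDr. Qed.

Lemma qnZ n (M : 'M[R]_n) (c d : R) w : qn (c *: M) (d *: w) = c * d ^+ 2 * qn M w.
Proof. by rewrite /qn -scalemxAl -scalemxAr !ipZl !ipZr; ring. Qed.

Lemma qn_mulmx m n (N : 'M[R]_(m, n)) (M : 'M[R]_m) w :
  qn (N^T *m M *m N) w = qn M (N *m w).
Proof. by rewrite /qn -!mulmxA ip_mulmx trmxK. Qed.

Lemma qn_block_diag m n (M : 'M[R]_m) (N : 'M[R]_n) a d :
  qn (block_mx M 0 0 N) (col_mx a d) = qn M a + qn N d.
Proof. by rewrite /qn mul_block_col !mul0mx addr0 add0r ip_col_mx. Qed.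

Lemma qnN n (M : 'M[R]_n) a : qn M (- a) = qn M a.
Proof. by rewrite /qn mulmxN ipNl ipNr opprK. Qed.

Lemma ip_sym n (M : 'M[R]_n) a b : M^T = M -> ip a (M *m b) = ip b (M *m a).
Proof. by move=> Ms; rewrite ip_mulmx Ms ipC. Qed.

Lemma qn_symD n (M : 'M[R]_n) a b : M^T = M ->
  qn M (a + b) = qn M a + 2 * ip a (M *m b) + qn M b.
Proof. by move=> Ms; rewrite /qn mulmxDr !ipDl !ipDr (ip_sym b a Ms); ring. Qed.

Lemma pdmx_unit n (M : 'M[R]_n) : pdmx M -> M \in unitmx.
Proof.
move=> [Ms Mpd]; rewrite -row_free_unit -kermx_eq0; apply/eqP/row_matrixP => i.
rewrite row0; set r := row i (kermx M).
have Mr : M *m r^T = 0.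
  by rewrite -{1}Ms -trmx_mul /r -row_mul mulmx_ker row0 trmx0.
apply/eqP/negPn/negP => /eqP rn.
have : r^T != 0 by apply/eqP => h; apply: rn; rewrite -(trmxK r) h trmx0.
by move/Mpd; rewrite /qn Mr ip0r ltxx.
Qed.

Lemma pdmx_qn_ge0 n (M : 'M[R]_n) w : pdmx M -> 0 <= qn M w.
Proof.
move=> [_ Mpd]; have [->|/Mpd/ltW //] := eqVneq w 0.
by rewrite qn0.
Qed.

Lemma pdmxZ n (M : 'M[R]_n) (c : R) : 0 < c -> pdmx M -> pdmx (c *: M).
Proof.
move=> c0 [Ms Mpd]; split; first by rewrite linearZ /= Ms.
by move=> w /Mpd Mw; rewrite /qn -scalemxAl ipZr mulr_gt0.
Qed.

End QuadraticForm.

Section QuadraticPlusLinear.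
Variables (R : realType) (n : nat) (E : 'M[R]_n).
Hypothesis E_pd : pdmx E.

Definition qlin (w y : 'cV[R]_n) : R := 2^-1 * qn E y + ip y w.

Lemma qn_invmx a : qn (invmx E) (E *m a) = qn E a.
Proof.
have Eu := pdmx_unit E_pd.
by rewrite /qn mulmxA mulVmx // mul1mx ipC.
Qed.

Lemma qlin_gap w w0 y :
  qlin w y + 2^-1 * qn (invmx E) (w - w0)
  = qlin w (- (invmx E *m w0)) + 2^-1 * qn E (y + invmx E *m w).
Proof.
have [Es _] := E_pd; have Eu := pdmx_unit E_pd.
set a := invmx E *m w; set a0 := invmx E *m w0.
have wE : w = E *m a by rewrite /a mulmxA mulmxV // mul1mx.
have w0E : w0 = E *m a0 by rewrite /a0 mulmxA mulmxV // mul1mx.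
rewrite /qlin.
have -> : w - w0 = E *m (a - a0) by rewrite mulmxBr -wE -w0E.
rewrite qn_invmx !qn_symD // qnN mulmxN !ipNr ipNl.
rewrite [in ip y w]wE [in ip a0 w]wE (ip_sym a0 a Es); lra.
Qed.

Lemma qlin_argmin w ys : (forall y, qlin w ys <= qlin w y) -> ys = - (invmx E *m w).
Proof.
move=> ys_min; have [_ Epd] := E_pd.
have := ys_min (- (invmx E *m w)).
have := qlin_gap w w ys; rewrite subrr qn0 mulr0 addr0 => ->.
rewrite -lerBrDl subrr pmulr_rle0 ?invr_gt0 // => qn_le0.
apply/eqP; rewrite -subr_eq0 opprK; apply/negPn/negP => /Epd.
by rewrite ltNge qn_le0.
Qed.

Local Open Scope ereal_scope.

Lemma two_block_argmin (X : Type) (a : X -> \bar R) (s : X -> 'cV[R]_n) (x0 x1 : X) :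
  (forall x, a x1 + (qlin (s x1) (- (invmx E *m s x0))%R)%:E
             <= a x + (qlin (s x) (- (invmx E *m s x0))%R)%:E) ->
  is_argmin (fun xw : X * 'cV[R]_n =>
      a xw.1 + (qlin (s xw.1) xw.2 + 2^-1 * qn (invmx E) (s xw.1 - s x0))%:E)
    (x1, - (invmx E *m s x1))%R.
Proof.
move=> x1_min [x w] /=; rewrite !qlin_gap addNr qn0 mulr0 addr0.
apply: (le_trans (x1_min x)); rewrite leeD2l // lee_fin lerDl.
by rewrite mulr_ge0 ?invr_ge0 // pdmx_qn_ge0.
Qed.

End QuadraticPlusLinear.

Section BlockFamilies.
Variables (R : realType) (ny : nat -> nat).
Implicit Types y ybar : bfam R ny.

Definition bclr y j : bfam R ny := bupd y (0 : 'cV_(ny j)).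

Lemma bmix_bupd_self j y ybar : bupd (bmix j y ybar) (ybar j) = bmix j y ybar.
Proof.
apply: functional_extensionality_dep => l; rewrite /bupd.
by case: dfwithP => // ; rewrite /bmix ltnn.
Qed.

Lemma bmixS j y ybar : bmix j.+1 y ybar = bupd (bmix j y ybar) (y j).
Proof.
apply: functional_extensionality_dep => l; rewrite /bupd /bmix.
case: dfwithP => [|{}l]; first by rewrite ltnSn.
by rewrite ltnS leq_eqVlt eq_sym => /negbTE ->.
Qed.

Lemma bclr_bmixB j y y' ybar l :
  bclr (bmix j y ybar) j l - bclr (bmix j y' ybar) j l
  = if (l < j)%N then y l - y' l else 0.
Proof.
rewrite /bclr /bupd; case: dfwithP => [|{}l jl]; first by rewrite dfwithin ltnn subrr.
by rewrite dfwithout // /bmix; case: ifP; rewrite ?subrr.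
Qed.

Lemma big_bupd (V : zmodType) p (G : forall l, 'cV[R]_(ny l) -> V) y j (w : 'cV_(ny j)) :
  (j < p)%N ->
  \sum_(l < p) G l (bupd y w l) = \sum_(l < p) G l (bclr y j l) + G j w - G j 0.
Proof.
move=> jp; rewrite (bigD1 (Ordinal jp)) //= [in RHS](bigD1 (Ordinal jp)) //=.
rewrite /bclr /bupd !dfwithin (eq_bigr (fun l : 'I_p => G l (bclr y j l))).
  by rewrite addrAC [G j 0 + _]addrC addrK addrC.
move=> l; rewrite -val_eqE /= eq_sym => jl.
by rewrite /bclr /bupd !dfwithout.
Qed.

End BlockFamilies.

Lemma quadf0 (R : realType) n (M : 'M[R]_n) (c : 'cV[R]_n) : quadf M c 0 = 0.
Proof. by rewrite /quadf qn0 ip0r mulr0 subr0. Qed.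

Lemma block_quad_decomp (R : realType) n nx (A : 'M[R]_(n, nx)) (P T E : 'M[R]_n)
  (c y0 w : 'cV[R]_n) (x g : 'cV[R]_nx) (sigma : R) :
  sigma != 0 -> T = E - sigma^-1 *: P - A *m A^T -> T^T = T ->
  let h v := quadf P c v + ip x (g + A^T *m v)
             + sigma / 2 * ip (g + A^T *m v) (g + A^T *m v) + sigma / 2 * qn T (v - y0) in
  h w = h 0 + qlin (sigma *: E) (sigma *: (A *m g) + (A *m x - c - sigma *: (T *m y0))) w.
Proof.
move=> s0 eT Ts h.
have eP : P = sigma *: (E - T - A *m A^T).
  rewrite eT; apply/matrixP => i j; rewrite !mxE.
  set Y := (\sum_(k < nx) _)%R; field; exact: s0.
rewrite /h mulmx0 addr0 /quadf /qlin /qn eP.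
rewrite sub0r !mulmx0 ip0l ip0r mulmxN ipNl ipNr opprK.
rewrite -!scalemxAl !mulmxBl !mulmxBr !ipZr !ipBl !ipBr !ipDl !ipDr !ipZr.
rewrite -(mulmxA A) ![ip w (A *m _)]ip_mulmx [ip y0 (T *m w)]ip_mulmx Ts !ipNr ipZr.
rewrite (ipC g) (ipC x) (ipC w c) (ipC (T *m y0)).
by rewrite mulr0 subr0 (ipC x (A^T *m w)); field.
Qed.

Section BlockObjective.
Variables (R : realType) (nu nx p : nat) (ny : nat -> nat).
Variables (F : 'M[R]_(nu, nx)) (A : forall j, 'M[R]_(ny j, nx)).
Variables (P : forall j, 'M[R]_(ny j)) (b : bfam R ny) (x : 'cV[R]_nx) (sigma : R).
Variables (phi : 'cV[R]_nu -> \bar R) (r : 'cV[R]_nx).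
Implicit Types (u : 'cV[R]_nu) (y ybar : bfam R ny).

Definition resid u y : 'cV[R]_nx := F^T *m u + \sum_(j < p) (A j)^T *m y j + r.

Definition bobj u y : \bar R :=
  (phi u + (\sum_(j < p) quadf (P j) (b j) (y j) + ip x (resid u y)
            + sigma / 2 * ip (resid u y) (resid u y))%:E)%E.

Lemma bobj_bmix u y ybar : bobj u (bmix p y ybar) = bobj u y.
Proof.
have yE (j : 'I_p) : bmix p y ybar j = y j by rewrite /bmix ltn_ord.
rewrite /bobj /resid (eq_bigr (fun j : 'I_p => quadf (P j) (b j) (y j))) => [|j _].
  by rewrite (eq_bigr (fun j : 'I_p => (A j)^T *m y j)) // => j _; rewrite yE.
by rewrite yE.
Qed.

Lemma Fm_stack j u y :
  (Fm F A j)^T *m stack u y j = F^T *m u + \sum_(l < j) (A l)^T *m y l.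
Proof.
elim: j => [|j IH] /=; first by rewrite big_ord0 addr0.
by rewrite tr_col_mx mul_row_col IH big_ord_recr /= addrA.
Qed.

Section UpdateBlock.
Variables (j : nat) (jp : (j < p)%N).

Lemma resid_bupd u y (w : 'cV_(ny j)) :
  resid u (bupd y w) = resid u (bclr y j) + (A j)^T *m w.
Proof.
rewrite /resid (big_bupd (fun l => mulmx (A l)^T) _ _ jp) mulmx0 subr0.
by rewrite addrA !(addrAC _ ((A j)^T *m w)).
Qed.

Lemma resid_bupd_bmixB u u' y y' ybar :
  resid u (bclr (bmix j y ybar) j) - resid u' (bclr (bmix j y' ybar) j)
  = (Fm F A j)^T *m stack (u - u') (bsub y y') j.
Proof.
have sumE : \sum_(l < j) (A l)^T *m bsub y y' l
    = \sum_(l < p) (A l)^T *m bclr (bmix j y ybar) j l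
      - \sum_(l < p) (A l)^T *m bclr (bmix j y' ybar) j l.
  rewrite (big_ord_widen p (fun l => (A l)^T *m bsub y y' l) (ltnW jp)) big_mkcond -sumrB.
  by apply: eq_bigr => l _; rewrite -mulmxBr bclr_bmixB; case: ifP; rewrite ?mulmx0.
rewrite Fm_stack mulmxDr mulmxN sumE /resid.
by rewrite opprD addrACA subrr addr0 opprD addrACA.
Qed.

Lemma bobj_bupd (E : forall l, 'M[R]_(ny l)) (y0 : 'cV_(ny j)) u y (w : 'cV_(ny j)) :
  let T := Tblk sigma P A E j in
  sigma != 0 -> T^T = T ->
  (bobj u (bupd y w) + (sigma / 2 * qn T (w - y0))%:E
   = bobj u (bclr y j)
     + (sigma / 2 * qn T (0 - y0)
        + qlin (sigma *: E j) (sigma *: (A j *m resid u (bclr y j))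
                               + (A j *m x - b j - sigma *: (T *m y0))) w)%:E)%E.
Proof.
move=> T s0 Ts.
have := block_quad_decomp (b j) y0 w x (resid u (bclr y j)) s0 (erefl T) Ts.
rewrite /= mulmx0 addr0 quadf0 /bobj resid_bupd.
rewrite (big_bupd (fun l => quadf (P l) (b l)) _ _ jp) quadf0 subr0 => decomp.
rewrite -!addeA -!EFinD; congr (_ + _%:E)%E; lra.
Qed.

End UpdateBlock.
End BlockObjective.

Section DiagonalProximalTerm.
Variables (R : realType) (nu nx : nat) (ny : nat -> nat) (sigma : R).
Variables (F : 'M[R]_(nu, nx)) (A : forall j, 'M[R]_(ny j, nx)).
Variables (P E : forall j, 'M[R]_(ny j)) (Tf : 'M[R]_nu).

(* Tdiag j.+1 is the paper's diag(hat T_(f_(j+1)), T_(theta_(j+1))); Tdiag 0 is T_f. *)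
Definition Tdiag j : 'M[R]_(ds nu ny j) :=
  match j with
  | 0 => Tf
  | j'.+1 => block_mx (hatT sigma F A P E Tf j') 0 0 (Tblk sigma P A E j')
  end.

Lemma hatT_Tdiag j : hatT sigma F A P E Tf j
  = Tdiag j + Fm F A j *m (A j)^T *m invmx (E j) *m A j *m (Fm F A j)^T.
Proof. by case: j. Qed.

Lemma qn_TdiagS j u y : sigma != 0 -> E j \in unitmx ->
  sigma / 2 * qn (Tdiag j.+1) (stack u y j.+1)
  = sigma / 2 * qn (Tdiag j) (stack u y j) + sigma / 2 * qn (Tblk sigma P A E j) (y j)
    + 2^-1 * qn (invmx (sigma *: E j)) (sigma *: (A j *m ((Fm F A j)^T *m stack u y j))).
Proof.
move=> s0 Eu; rewrite /= qn_block_diag hatT_Tdiag qnDl.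
rewrite invmxZ ?unitmxZ ?unitfE // qnZ -mulmxA -qn_mulmx -qn_mulmx trmxK !mulmxA.
by field.
Qed.

End DiagonalProximalTerm.

Lemma fin_num_addr_le (R : realDomainType) (a t : \bar R) (s : R) :
  a != -oo%E -> t \is a fin_num -> (a + s%:E <= t)%E -> a \is a fin_num.
Proof.
case: a => // _ tf; rewrite addye // leye_eq => /eqP tE.
by move: tf; rewrite tE.
Qed.

Section Sweep.
Local Open Scope ereal_scope.
Variables (R : realType) (nu nx p : nat) (ny : nat -> nat).
Variables (F : 'M[R]_(nu, nx)) (A : forall j, 'M[R]_(ny j, nx)).
Variables (P : forall j, 'M[R]_(ny j)) (b : bfam R ny) (x : 'cV[R]_nx) (sigma : R).
Variables (phi : 'cV[R]_nu -> \bar R) (r : 'cV[R]_nx).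
Variables (E : forall j, 'M[R]_(ny j)) (Tf : 'M[R]_nu).
Variable L : 'cV[R]_nu -> bfam R ny -> \bar R.
Hypothesis L_bobj : forall u y, L u y = bobj p F A P b x sigma phi r u y.
Variables (u0 u1 : 'cV[R]_nu) (y0 y1 ybar : bfam R ny).

Hypothesis sigma_gt0 : (0 < sigma)%R.
Hypothesis E_pd : forall j, (j < p)%N -> pdmx (E j).
Hypothesis Tblk_sym : forall j, (j < p)%N -> (Tblk sigma P A E j)^T = Tblk sigma P A E j.
Hypothesis phi_ninfty : forall u, phi u != -oo.
Hypothesis phi_u0 : phi u0 \is a fin_num.

Hypothesis backward : forall j, (j < p)%N ->
  is_argmin (fun w : 'cV_(ny j) =>
      L u0 (bupd (bmix j y0 ybar) w) + (sigma / 2 * qn (Tblk sigma P A E j) (w - y0 j))%:E)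
    (ybar j).
Hypothesis ustep :
  is_argmin (fun w : 'cV_nu => L w ybar + (sigma / 2 * qn Tf (w - u0))%:E) u1.
Hypothesis forward : forall j, (j < p)%N ->
  is_argmin (fun w : 'cV_(ny j) =>
      L u1 (bupd (bmix j y1 ybar) w) + (sigma / 2 * qn (Tblk sigma P A E j) (w - y0 j))%:E)
    (y1 j).

(* Up to a constant, the y_j-subproblem at uy is qlin (sigma *: E j) (sweep_lin j uy). *)
Definition sweep_lin j (uy : 'cV[R]_nu * bfam R ny) : 'cV[R]_(ny j) :=
  sigma *: (A j *m resid p F A r uy.1 (bclr (bmix j uy.2 ybar) j))
  + (A j *m x - b j - sigma *: (Tblk sigma P A E j *m y0 j)).

(* Invariant of the forward sweep: blocks below j free, blocks from j on frozen at ybar. *)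
Definition sweep_obj j (uy : 'cV[R]_nu * bfam R ny) : \bar R :=
  L uy.1 (bmix j uy.2 ybar)
  + (sigma / 2 * qn (Tdiag sigma F A P E Tf j) (stack (uy.1 - u0) (bsub uy.2 y0) j))%:E.

Lemma phi_u1 : phi u1 \is a fin_num.
Proof.
have := ustep u0; rewrite !L_bobj /bobj -!addeA -!EFinD.
apply: fin_num_addr_le => //.
by rewrite !fin_numD phi_u0.
Qed.

Lemma block_argmin_sol j (uy : 'cV[R]_nu * bfam R ny) (ys : 'cV_(ny j)) :
  (j < p)%N -> phi uy.1 \is a fin_num ->
  is_argmin (fun w : 'cV_(ny j) =>
      L uy.1 (bupd (bmix j uy.2 ybar) w) + (sigma / 2 * qn (Tblk sigma P A E j) (w - y0 j))%:E)
    ys ->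
  ys = (- (invmx (sigma *: E j) *m sweep_lin j uy))%R.
Proof.
move=> jp phi_fin ys_min; apply: (qlin_argmin (pdmxZ sigma_gt0 (E_pd jp))) => w.
have := ys_min w; rewrite !L_bobj !bobj_bupd ?gt_eqF ?Tblk_sym //.
by rewrite leeD2lE ?lee_fin ?lerD2l // fin_numD phi_fin.
Qed.

Lemma sweep_linB j (uy : 'cV[R]_nu * bfam R ny) : (j < p)%N ->
  (sweep_lin j uy - sweep_lin j (u0, y0)
   = sigma *: (A j *m ((Fm F A j)^T *m stack (uy.1 - u0) (bsub uy.2 y0) j)))%R.
Proof.
move=> jp; rewrite -(@resid_bupd_bmixB _ _ _ p _ F A r j jp _ _ _ _ ybar) mulmxBr scalerBr.
by rewrite /sweep_lin [in X in (_ - X)%R]addrC addrKA.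
Qed.

Lemma sweep_step j : (j < p)%N ->
  is_argmin (sweep_obj j) (u1, y1) -> is_argmin (sweep_obj j.+1) (u1, y1).
Proof.
move=> jp IH.
set T := Tblk sigma P A E j.
set D := fun uy : 'cV[R]_nu * bfam R ny =>
  (sigma / 2 * qn (Tdiag sigma F A P E Tf j) (stack (uy.1 - u0) (bsub uy.2 y0) j))%R.
pose a uy := L uy.1 (bclr (bmix j uy.2 ybar) j) + (sigma / 2 * qn T (0 - y0 j) + D uy)%:E.
have block_decomp uy w :
    L uy.1 (bupd (bmix j uy.2 ybar) w) + (sigma / 2 * qn T (w - y0 j) + D uy)%:E
    = a uy + (qlin (sigma *: E j) (sweep_lin j uy) w)%:E.
  rewrite EFinD addeA L_bobj bobj_bupd ?gt_eqF ?Tblk_sym // -L_bobj /a -!addeA -!EFinD.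
  by congr (_ + _%:E); rewrite addrAC.
have ybarE := block_argmin_sol (uy := (u0, y0)) jp phi_u0 (backward jp).
have y1E := block_argmin_sol (uy := (u1, y1)) jp phi_u1 (forward jp).
have sweep_obj_frozen uy : a uy + (qlin (sigma *: E j) (sweep_lin j uy) (ybar j))%:E
    = sweep_obj j uy + (sigma / 2 * qn T (ybar j - y0 j))%:E.
  rewrite -block_decomp bmix_bupd_self /sweep_obj -addeA -EFinD.
  by congr (_ + _%:E); rewrite addrC.
have sweep_objS uy : sweep_obj j.+1 uy
    = a uy + (qlin (sigma *: E j) (sweep_lin j uy) (uy.2 j)
              + 2^-1 * qn (invmx (sigma *: E j)) (sweep_lin j uy - sweep_lin j (u0, y0)))%:E.
  rewrite /sweep_obj qn_TdiagS ?gt_eqF ?(pdmx_unit (E_pd jp)) // -(sweep_linB uy jp) bmixS.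
  by rewrite -/(D uy) /bsub (addrC (D uy)) EFinD addeA block_decomp -addeA -EFinD.
have := two_block_argmin (pdmxZ sigma_gt0 (E_pd jp)) (a := a) (s := sweep_lin j)
  (x0 := (u0, y0)) (x1 := (u1, y1)).
rewrite -ybarE -y1E => tb [u y]; rewrite !sweep_objS; apply: (tb _ (u, y, y j)) => uy.
by rewrite !sweep_obj_frozen leeD2r // IH.
Qed.

Lemma sweep_argmin j : (j <= p)%N -> is_argmin (sweep_obj j) (u1, y1).
Proof.
elim: j => [_ [u y]|j IH jp]; first exact: ustep u.
exact: sweep_step jp (IH (ltnW jp)).
Qed.

Lemma sgs_argmin : (0 < p)%N ->
  is_argmin (fun uy : 'cV[R]_nu * bfam R ny =>
      L uy.1 uy.2
      + (sigma / 2 * qn (hatT sigma F A P E Tf p.-1) (stack (uy.1 - u0) (bsub uy.2 y0) p.-1)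
         + sigma / 2 * qn (Tblk sigma P A E p.-1) (uy.2 p.-1 - y0 p.-1))%:E)
    (u1, y1).
Proof.
move=> p_gt0 uy; have p_le : (p.-1.+1 <= p)%N by rewrite prednK.
have := sweep_argmin p_le uy.
by rewrite /sweep_obj /= !qn_block_diag !mulrDr (prednK p_gt0) !L_bobj !bobj_bmix.
Qed.

End Sweep.

Section AugmentedLagrangian.
Local Open Scope ereal_scope.
Variables (R : realType) (nu nv nx : nat) (ny nz : nat -> nat) (p q : nat).
Variables (f : 'cV[R]_nu -> \bar R) (g : 'cV[R]_nv -> \bar R).
Variables (F : 'M[R]_(nu, nx)) (G : 'M[R]_(nv, nx)).
Variables (A : forall j, 'M[R]_(ny j, nx)) (B : forall j, 'M[R]_(nz j, nx)) (c : 'cV[R]_nx).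
Variables (P : forall j, 'M[R]_(ny j)) (b : bfam R ny).
Variables (Q : forall j, 'M[R]_(nz j)) (d : bfam R nz) (sigma : R).
Variables (u : 'cV[R]_nu) (y : bfam R ny) (v : 'cV[R]_nv) (z : bfam R nz) (x : 'cV[R]_nx).

Lemma Lag_bobjU : Lag p q f g F A G B c P b Q d sigma u y v z x
  = bobj p F A P b x sigma (fun w => f w + g v + (\sum_(j < q) quadf (Q j) (d j) (z j))%:E)
      (G^T *m v + \sum_(j < q) (B j)^T *m z j - c)%R u y.
Proof.
rewrite /Lag /bobj /resid /Gam !addrA /= -[in RHS]addeA -[in RHS]EFinD.
by congr (_ + _%:E); rewrite /quadf; lra.
Qed.

Lemma Lag_bobjV : Lag p q f g F A G B c P b Q d sigma u y v z x
  = bobj q G B Q d x sigma (fun w => f u + g w + (\sum_(j < p) quadf (P j) (b j) (y j))%:E)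
      (F^T *m u + \sum_(j < p) (A j)^T *m y j - c)%R v z.
Proof.
rewrite /Lag /bobj /resid /Gam.
have -> : (F^T *m u + \sum_(j < p) (A j)^T *m y j + G^T *m v + \sum_(j < q) (B j)^T *m z j - c
  = G^T *m v + \sum_(j < q) (B j)^T *m z j + (F^T *m u + \sum_(j < p) (A j)^T *m y j - c))%R.
  by apply/matrixP => i j; rewrite !mxE; lra.
rewrite /= -[in RHS]addeA -[in RHS]EFinD (addeC (f u)).
by congr (_ + _%:E); rewrite /quadf; lra.
Qed.

End AugmentedLagrangian.

Lemma fin_num_alternating (R : realType) (T U : Type) (f : T -> \bar R) (g : U -> \bar R)
  (u : nat -> T) (v : nat -> U) :
  (forall w, f w != -oo%E) -> (forall w, g w != -oo%E) ->
  f (u 0%N) \is a fin_num -> g (v 0%N) \is a fin_num ->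
  (forall k, exists e e' : R,
     (f (u k.+1) + (g (v k) + e%:E) <= f (u k) + (g (v k) + e'%:E))%E) ->
  (forall k, exists e e' : R,
     (f (u k.+1) + (g (v k.+1) + e%:E) <= f (u k.+1) + (g (v k) + e'%:E))%E) ->
  forall k, f (u k) \is a fin_num /\ g (v k) \is a fin_num.
Proof.
move=> f_ninfty g_ninfty fu0 gv0 u_step v_step.
have ninfty_sum (a a' : \bar R) : a != -oo%E -> a' != -oo%E -> (a + a' != -oo)%E.
  by move=> ha ha'; rewrite adde_eq_ninfty negb_or ha ha'.
elim=> [//|k [fk gk]].
have [e [e' le_u]] := u_step k; rewrite !addeA in le_u.
have fk1 : f (u k.+1) \is a fin_num.
  suff : f (u k.+1) + g (v k) \is a fin_num by rewrite fin_numD => /andP[].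
  apply: (fin_num_addr_le _ _ le_u); first exact: ninfty_sum.
  by rewrite !fin_numD fk gk.
have [e2 [e2' le_v]] := v_step k; rewrite !addeA in le_v.
have : f (u k.+1) + g (v k.+1) \is a fin_num.
  apply: (fin_num_addr_le _ _ le_v); first exact: ninfty_sum.
  by rewrite !fin_numD fk1 gk.
by rewrite fin_numD => /andP.
Qed.

(* Block indices are 0-based: y_j (j < p) here is the paper's y_{j+1}. *)
Theorem proposition3p2 (R : realType) (nu nv nx : nat) (ny nz : nat -> nat) (p q : nat)
  (f : 'cV[R]_nu -> \bar R) (g : 'cV[R]_nv -> \bar R)
  (F : 'M[R]_(nu, nx)) (G : 'M[R]_(nv, nx))
  (A : forall j, 'M[R]_(ny j, nx)) (B : forall j, 'M[R]_(nz j, nx))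
  (c : 'cV[R]_nx)
  (P : forall j, 'M[R]_(ny j)) (b : bfam R ny)
  (Q : forall j, 'M[R]_(nz j)) (d : bfam R nz)
  (sigma tau : R)
  (Ey : forall j, 'M[R]_(ny j)) (Ez : forall j, 'M[R]_(nz j))
  (Tf : 'M[R]_nu) (Tg : 'M[R]_nv)
  (u : nat -> 'cV[R]_nu) (y ybar : nat -> bfam R ny)
  (v : nat -> 'cV[R]_nv) (z zbar : nat -> bfam R nz)
  (x : nat -> 'cV[R]_nx) :
  (0 < p)%N -> (0 < q)%N -> 0 < sigma -> 0 < tau ->
  closed_proper_convex f -> closed_proper_convex g ->
  (forall j, (j < p)%N -> psdmx (P j)) ->
  (forall j, (j < q)%N -> psdmx (Q j)) ->
  (forall j, (j < p)%N -> pdmx (Ey j) /\ psdmx (Tblk sigma P A Ey j)) ->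
  (forall j, (j < q)%N -> pdmx (Ez j) /\ psdmx (Tblk sigma Q B Ez j)) ->
  psdmx Tf -> psdmx Tg ->
  (f (u 0%N) < +oo)%E -> (g (v 0%N) < +oo)%E ->
  let L := Lag p q f g F A G B c P b Q d sigma in
  (* the sequence is generated by Algorithm SCB-SPADMM *)
  (forall k,
    (* step 1 *)
    (forall j, (j < p)%N ->
       is_argmin (fun w : 'cV[R]_(ny j) =>
           (L (u k) (bupd (bmix j (y k) (ybar k)) w) (v k) (z k) (x k)
            + (sigma / 2 * qn (Tblk sigma P A Ey j) (w - y k j))%:E)%E)
         (ybar k j))
    /\ is_argmin (fun w : 'cV[R]_nu =>
           (L w (ybar k) (v k) (z k) (x k) + (sigma / 2 * qn Tf (w - u k))%:E)%E)
         (u k.+1)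
    (* step 2 *)
    /\ (forall j, (j < p)%N ->
       is_argmin (fun w : 'cV[R]_(ny j) =>
           (L (u k.+1) (bupd (bmix j (y k.+1) (ybar k)) w) (v k) (z k) (x k)
            + (sigma / 2 * qn (Tblk sigma P A Ey j) (w - y k j))%:E)%E)
         (y k.+1 j))
    (* step 3 *)
    /\ (forall j, (j < q)%N ->
       is_argmin (fun w : 'cV[R]_(nz j) =>
           (L (u k.+1) (y k.+1) (v k) (bupd (bmix j (z k) (zbar k)) w) (x k)
            + (sigma / 2 * qn (Tblk sigma Q B Ez j) (w - z k j))%:E)%E)
         (zbar k j))
    /\ is_argmin (fun w : 'cV[R]_nv =>
           (L (u k.+1) (y k.+1) w (zbar k) (x k) + (sigma / 2 * qn Tg (w - v k))%:E)%E)
         (v k.+1)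
    (* step 4 *)
    /\ (forall j, (j < q)%N ->
       is_argmin (fun w : 'cV[R]_(nz j) =>
           (L (u k.+1) (y k.+1) (v k.+1) (bupd (bmix j (z k.+1) (zbar k)) w) (x k)
            + (sigma / 2 * qn (Tblk sigma Q B Ez j) (w - z k j))%:E)%E)
         (z k.+1 j))
    (* step 5 *)
    /\ x k.+1 = x k + (tau * sigma) *: Gam p q F A G B c (u k.+1) (y k.+1) (v k.+1) (z k.+1)) ->
  forall k,
    is_argmin (fun uy : 'cV[R]_nu * bfam R ny =>
        (L uy.1 uy.2 (v k) (z k) (x k)
         + (sigma / 2 * qn (hatT sigma F A P Ey Tf p.-1)
                            (stack (uy.1 - u k) (bsub uy.2 (y k)) p.-1)
            + sigma / 2 * qn (Tblk sigma P A Ey p.-1) (uy.2 p.-1 - y k p.-1))%:E)%E)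
      (u k.+1, y k.+1)
    /\ is_argmin (fun vz : 'cV[R]_nv * bfam R nz =>
        (L (u k.+1) (y k.+1) vz.1 vz.2 (x k)
         + (sigma / 2 * qn (hatT sigma G B Q Ez Tg q.-1)
                            (stack (vz.1 - v k) (bsub vz.2 (z k)) q.-1)
            + sigma / 2 * qn (Tblk sigma Q B Ez q.-1) (vz.2 q.-1 - z k q.-1))%:E)%E)
      (v k.+1, z k.+1)
    /\ x k.+1 = x k + (tau * sigma) *: Gam p q F A G B c (u k.+1) (y k.+1) (v k.+1) (z k.+1).
Proof.
move=> p_gt0 q_gt0 sigma_gt0 _ [_ _ [f_ninfty _]] [_ _ [g_ninfty _]] _ _ Ey_pd Ez_pd _ _.
move=> fu0 gv0 L scb.
have fin : forall k, f (u k) \is a fin_num /\ g (v k) \is a fin_num.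
  apply: (fin_num_alternating f_ninfty g_ninfty).
  - by rewrite fin_numE f_ninfty lt_eqF.
  - by rewrite fin_numE g_ninfty lt_eqF.
  - move=> k; have [_ [ustep _]] := scb k; have := ustep (u k).
    by rewrite /L /Lag /= -!addeA -!EFinD => le_u; do 2 eexists; exact: le_u.
  - move=> k; have [_ [_ [_ [_ [vstep _]]]]] := scb k; have := vstep (v k).
    by rewrite /L /Lag /= -!addeA -!EFinD => le_v; do 2 eexists; exact: le_v.
move=> k; have [[fk gk] [fk1 _]] := (fin k, fin k.+1).
have [bw [us [fw [bwz [vs [fwz xs]]]]]] := scb k.
split; [|split=> //].
- apply: (sgs_argmin (L := fun w y' => L w y' (v k) (z k) (x k))
           (fun w y' => Lag_bobjU p q f g F G A B c P b Q d sigma w y' (v k) (z k) (x k))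
           sigma_gt0 (fun j jp => (Ey_pd j jp).1) (fun j jp => (Ey_pd j jp).2.1)
           _ _ bw us fw p_gt0).
  + by move=> w; rewrite !adde_eq_ninfty !negb_or f_ninfty g_ninfty.
  + by rewrite !fin_numD fk gk.
- apply: (sgs_argmin (L := fun w z' => L (u k.+1) (y k.+1) w z' (x k))
           (fun w z' => Lag_bobjV p q f g F G A B c P b Q d sigma (u k.+1) (y k.+1) w z' (x k))
           sigma_gt0 (fun j jq => (Ez_pd j jq).1) (fun j jq => (Ez_pd j jq).2.1)
           _ _ bwz vs fwz q_gt0).
  + by move=> w; rewrite !adde_eq_ninfty !negb_or f_ninfty g_ninfty.
  + by rewrite !fin_numD fk1 gk.
Qed.
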